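(* Let $G$ be the graph associated with a succinct representation $\mathcal{G}=(H,\{(\ell_i,S_i)\mid 1\le i\le r\})$. Then $\mathcal{I}(G)\ge \sum_{i=1}^r\gamma(\ell_i)$, where $\gamma(\ell)=\ell^2/2$ if $\ell$ is even and $\gamma(\ell)=(\ell^2-1)/2$ if $\ell$ is odd.
   Context: All graphs are finite, simple and undirected. For an ordering $\sigma$ of $V(G)$ and $v\in V(G)$, $N_L(v,\sigma)$ and $N_R(v,\sigma)$ are the sets of neighbours of $v$ preceding and following $v$; $\mathcal{I}(v,\sigma)=\big||N_L(v,\sigma)|-|N_R(v,\sigma)|\big|$, $\mathcal{I}(\sigma)=\sum_v\mathcal{I}(v,\sigma)$, and $\mathcal{I}(G)=\min_\sigma\mathcal{I}(\sigma)$. A succinct representation is a tuple $(H,\{(\ell_i,S_i)\mid 1\le i\le r\})$ where $H$ is a graph, each $\ell_i$ is a positive integer and $S_i\subseteq V(H)$; its associated graph $G$ has vertex set $V(H)\cup C_1\cup\dots\cup C_r$ (pairwise disjoint, $|C_i|=\ell_i$), with edges: those of $H$ on $V(H)$, all edges within each $C_i$, no edges between distinct $C_i$'s, and $v\in V(H)$ adjacent to every vertex of $C_i$ iff $v\in S_i$ (and to none otherwise). *)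

From mathcomp Require Import all_boot all_fingroup.
Set Implicit Arguments. Unset Strict Implicit. Unset Printing Implicit Defensive.

(* An ordering of V is represented by a permutation s of V: vertex v is at
   position enum_rank (s v) (every linear order of V arises this way). *)
Section Imbalance.
Variables (V : finType) (e : rel V).

Definition pos (s : {perm V}) (v : V) : nat := enum_rank (s v).

Definition NL (s : {perm V}) (v : V) : {set V} :=
  [set u | e v u & pos s u < pos s v].
Definition NR (s : {perm V}) (v : V) : {set V} :=
  [set u | e v u & pos s v < pos s u].

Definition absdiff (a b : nat) : nat := (a - b) + (b - a).

Definition vimb (s : {perm V}) (v : V) : nat := absdiff #|NL s v| #|NR s v|.
Definition ord_imbalance (s : {perm V}) : nat := \sum_(v : V) vimb s v.

Definition graph_imbalance : nat :=
  \big[minn/ord_imbalance 1%g]_(s : {perm V}) ord_imbalance s.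
End Imbalance.

(* The graph associated with a succinct representation (H, {(ell_i, S_i)}):
   vertices V(H) + disjoint cliques C_i = {i} x 'I_(ell i). *)
Section Succinct.
Variables (VH : finType) (eH : rel VH) (r : nat) (ell : 'I_r -> nat)
          (S : 'I_r -> {set VH}).

Definition succ_vertex : finType := (VH + {i : 'I_r & 'I_(ell i)})%type.

Definition succ_edge : rel succ_vertex := fun x y =>
  match x, y with
  | inl a, inl b => eH a b
  | inr c, inr d => (tag c == tag d) && (c != d)
  | inl a, inr d => a \in S (tag d)
  | inr c, inl b => b \in S (tag c)
  end.
End Succinct.

Definition gamma (l : nat) : nat :=
  if odd l then (l ^ 2 - 1) %/ 2 else l ^ 2 %/ 2.

From mathcomp Require Import all_boot all_fingroup.
From mathcomp Require Import all_order all_algebra zify.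
Import Order.TTheory.
Set Implicit Arguments. Unset Strict Implicit. Unset Printing Implicit Defensive.

(* The vertices of a clique C_i are pairwise true twins. If u precedes v in an
   ordering, v has on its left u, all left neighbours of u, and every common
   neighbour lying between them, and symmetrically u has on its right v, all
   right neighbours of v and the same common neighbours. Hence the signed
   imbalance |N_L| - |N_R| grows by at least 2(k+1) from u to v, where k counts
   the vertices of C_i strictly between them. Pairing the first and last
   vertices of C_i, then the second and the second-to-last, and so on, the
   imbalances on C_i add up to at least 2(l-1) + 2(l-3) + ... = gamma(l). *)

Lemma gammaSS m : gamma m.+2 = gamma m + 2 * m.+1.
Proof.
rewrite /gamma /= negbK.
have -> : m.+2 ^ 2 = m ^ 2 + 4 * m.+1 by rewrite !expnS expn0; lia.
case: ifP => odd_m; last by set q := m ^ 2; lia.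
have : 0 < m ^ 2 by rewrite expn_gt0; case: m odd_m.
set q := m ^ 2; lia.
Qed.

Section SeparatedValues.
Variables (T : finType) (p : T -> nat) (d : T -> int).
Hypothesis p_inj : injective p.

Definition separated (A : {set T}) := {in A &, forall u v, p u < p v ->
  (Posz (2 * #|[set w in A | p u < p w < p v]|.+1)%N <= d v - d u)%R}.

Lemma separatedS (A B : {set T}) : B \subset A -> separated A -> separated B.
Proof.
move=> sBA sepA u v uB vB lt_uv.
apply: le_trans (sepA u v (subsetP sBA u uB) (subsetP sBA v vB) lt_uv).
rewrite lez_nat leq_mul2l ltnS subset_leq_card //.
by apply/subsetP=> w; rewrite !inE => /andP[/(subsetP sBA) -> ->].
Qed.

Lemma between_extremes (A : {set T}) a b :
    a \in A -> b \in A -> {in A, forall w, p a <= p w <= p b} ->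
  [set w in A | p a < p w < p b] = A :\ a :\ b.
Proof.
move=> aA bA ext; apply/setP=> w; rewrite !inE.
case wA: (w \in A); rewrite ?andbF //=; have /andP[le_aw le_wb] := ext w wA.
by rewrite !ltn_neqAle le_aw le_wb !andbT !(inj_eq p_inj) eq_sym andbC.
Qed.

Lemma gamma_le_sum_separated (A : {set T}) :
  separated A -> gamma #|A| <= \sum_(v in A) `|d v|%N.
Proof.
have [n] := ubnP #|A|; elim: n A => // n IH A; rewrite ltnS => leAn sepA.
have [le_A1 | lt_1A] := leqP #|A| 1; first by case: #|A| le_A1 => [|[]].
have [a0 a0A] : {a0 | a0 \in A}.
  by case: (pickP (mem A)) => [x xA|/eq_card0 A0]; [exists x | rewrite A0 in lt_1A].
case: (arg_minnP p a0A) => a aA min_a; case: (arg_maxnP p a0A) => b bA max_b.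
have {aA bA} [aA bA] : a \in A /\ b \in A by [].
have ext : {in A, forall w, p a <= p w <= p b}.
  by move=> w wA; apply/andP; split; [exact: min_a | exact: max_b].
have neq_ab : a != b.
  apply: contraTneq lt_1A => eq_ab; rewrite -leqNgt; apply/card_le1_eqP => x y xA yA.
  have eq_a w : w \in A -> w = a.
    move=> wA; apply: p_inj; apply/eqP; rewrite eqn_leq andbC.
    by have := ext w wA; rewrite -eq_ab.
  by rewrite (eq_a x xA) (eq_a y yA).
have lt_ab : p a < p b by rewrite ltn_neqAle (inj_eq p_inj) neq_ab; case/andP: (ext b bA).
have bAa : b \in A :\ a by rewrite !inE eq_sym neq_ab.
set A' := A :\ a :\ b.
have cardA : #|A| = #|A'|.+2 by rewrite (cardsD1 a A) (cardsD1 b (A :\ a)) aA bAa.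
have IHA' : gamma #|A'| <= \sum_(v in A') `|d v|%N.
  apply: IH; first by apply: ltnW; rewrite -cardA.
  by apply: separatedS sepA; apply: subset_trans (subD1set _ _) (subD1set _ _).
have := sepA a b aA bA lt_ab; rewrite between_extremes // -/A'.
rewrite (big_setD1 a) // (big_setD1 b) //= -/A' cardA gammaSS.
move: IHA' (d a) (d b) => + x y; set s := \sum_(v in A') _; lia.
Qed.

End SeparatedValues.

Lemma pos_inj (V : finType) (s : {perm V}) : injective (pos s).
Proof. by move=> u v /val_inj/enum_rank_inj/perm_inj. Qed.

Section TrueTwins.
Variables (V : finType) (e : rel V) (s : {perm V}).

Definition signed_vimb (v : V) : int := (Posz #|NL e s v| - Posz #|NR e s v|)%R.

Lemma vimbE v : vimb e s v = `|signed_vimb v|%N.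
Proof. by rewrite /vimb /absdiff /signed_vimb; lia. Qed.

Definition true_twins (u v : V) :=
  [/\ e u v, e v u & forall y, y != u -> y != v -> e u y = e v y].

Variables (u v : V).
Hypotheses (twins_uv : true_twins u v) (lt_uv : pos s u < pos s v).

Let between := [set w | e u w & pos s u < pos s w < pos s v].

Lemma card_NL_true_twins : #|NL e s u| + #|between| < #|NL e s v|.
Proof.
have [e_uv e_vu same_nb] := twins_uv.
have disj : NL e s u :&: between = set0.
  apply/setP=> w; rewrite !inE; apply/negbTE/negP.
  by case/andP=> /andP[_ lt_wu] /and3P[_ lt_uw _]; move: lt_wu; rewrite ltnNge ltnW.
have u_out : u \notin NL e s u :|: between by rewrite !inE ltnn !andbF.
have card_union : #|NL e s u :|: between| = #|NL e s u| + #|between|.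
  by rewrite -cardsUI disj cards0 addn0.
have := cardsU1 u (NL e s u :|: between); rewrite u_out add1n card_union => <-.
apply/subset_leq_card/subsetP=> w; rewrite !inE.
case/or3P=> [/eqP-> | /andP[e_uw lt_wu] | /and3P[e_uw lt_uw lt_wv]].
- by rewrite e_vu.
- rewrite (ltn_trans lt_wu lt_uv) andbT -same_nb //.
  + by apply: contraTneq lt_wu => ->; rewrite ltnn.
  + by apply: contraTneq lt_wu => ->; rewrite ltnNge ltnW.
- rewrite lt_wv andbT -same_nb //.
  + by apply: contraTneq lt_uw => ->; rewrite ltnn.
  + by apply: contraTneq lt_wv => ->; rewrite ltnn.
Qed.

Lemma card_NR_true_twins : #|NR e s v| + #|between| < #|NR e s u|.
Proof.
have [e_uv e_vu same_nb] := twins_uv.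
have disj : NR e s v :&: between = set0.
  apply/setP=> w; rewrite !inE; apply/negbTE/negP.
  by case/andP=> /andP[_ lt_vw] /and3P[_ _ lt_wv]; move: lt_vw; rewrite ltnNge ltnW.
have v_out : v \notin NR e s v :|: between by rewrite !inE ltnn !andbF.
have card_union : #|NR e s v :|: between| = #|NR e s v| + #|between|.
  by rewrite -cardsUI disj cards0 addn0.
have := cardsU1 v (NR e s v :|: between); rewrite v_out add1n card_union => <-.
apply/subset_leq_card/subsetP=> w; rewrite !inE.
case/or3P=> [/eqP-> | /andP[e_vw lt_vw] | /and3P[e_uw lt_uw lt_wv]].
- by rewrite e_uv.
- rewrite (ltn_trans lt_uv lt_vw) andbT same_nb //.
  + by apply: contraTneq lt_vw => ->; rewrite ltnNge ltnW.
  + by apply: contraTneq lt_vw => ->; rewrite ltnn.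
- by rewrite e_uw.
Qed.

Lemma signed_vimb_true_twins :
  (Posz (2 * #|between|.+1) <= signed_vimb v - signed_vimb u)%R.
Proof.
have := card_NL_true_twins; have := card_NR_true_twins.
by rewrite /signed_vimb; lia.
Qed.

End TrueTwins.

Section SuccinctClique.
Variables (VH : finType) (eH : rel VH) (r : nat) (ell : 'I_r -> nat)
          (S : 'I_r -> {set VH}).
Let e := @succ_edge VH eH r ell S.
Variables (s : {perm succ_vertex VH ell}) (i : 'I_r).

Definition clique_vertex (j : 'I_(ell i)) : succ_vertex VH ell :=
  inr (Tagged (fun k => 'I_(ell k)) j).

Lemma clique_vertex_inj : injective clique_vertex.
Proof. by move=> j k [] eq_jk; apply: eq_from_Tagged eq_jk. Qed.

Lemma clique_edge j k : e (clique_vertex j) (clique_vertex k) = (j != k).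
Proof. by rewrite /e /= eqxx (inj_eq (@eq_from_Tagged _ (fun m => 'I_(ell m)) i)). Qed.

Lemma clique_true_twins j k :
  j != k -> true_twins e (clique_vertex j) (clique_vertex k).
Proof.
move=> neq_jk; split; [by rewrite clique_edge | by rewrite clique_edge eq_sym |].
case=> [b|c] //= ne_jc ne_kc.
have /negbTE-> : Tagged (fun m => 'I_(ell m)) j != c by apply: contra ne_jc => /eqP<-.
by have /negbTE-> : Tagged (fun m => 'I_(ell m)) k != c by apply: contra ne_kc => /eqP<-.
Qed.

Lemma separated_clique :
  separated (pos s \o clique_vertex) (signed_vimb e s \o clique_vertex) setT.
Proof.
move=> j k _ _ /= lt_jk.
have neq_jk : j != k by apply: contraTneq lt_jk => ->; rewrite ltnn.
apply: le_trans (signed_vimb_true_twins (clique_true_twins neq_jk) lt_jk).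
rewrite lez_nat leq_mul2l ltnS -(card_imset _ clique_vertex_inj) subset_leq_card //.
apply/subsetP=> _ /imsetP[w + ->]; rewrite !inE andTb => /andP[lt_jw lt_wk].
by rewrite lt_jw lt_wk clique_edge !andbT; apply: contraTneq lt_jw => ->; rewrite ltnn.
Qed.

Lemma gamma_le_clique_vimb :
  gamma (ell i) <= \sum_(j : 'I_(ell i)) vimb e s (clique_vertex j).
Proof.
have pv_inj : injective (pos s \o clique_vertex).
  exact: inj_comp (@pos_inj _ s) clique_vertex_inj.
have := gamma_le_sum_separated pv_inj separated_clique.
rewrite cardsT card_ord => /leq_trans; apply.
rewrite (eq_bigl predT) => [|j]; last by rewrite in_setT.
by apply/eq_leq/eq_bigr=> j _; rewrite vimbE.
Qed.

End SuccinctClique.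

Lemma sum_gamma_le_ord_imbalance (VH : finType) (eH : rel VH) (r : nat)
    (ell : 'I_r -> nat) (S : 'I_r -> {set VH}) (s : {perm succ_vertex VH ell}) :
  \sum_(i < r) gamma (ell i) <= ord_imbalance (@succ_edge VH eH r ell S) s.
Proof.
rewrite /ord_imbalance big_sumType /=; apply: leq_trans (leq_addl _ _).
set F := fun i j => vimb (succ_edge eH S) s (@clique_vertex VH r ell i j).
rewrite (eq_bigr (fun c => F (tag c) (tagged c))).
  rewrite -(sig_big_dep xpredT (fun=> xpredT) F) /=.
  by apply: leq_sum => i _; apply: gamma_le_clique_vimb.
by case.
Qed.

(* Only the cliques contribute to the bound. *)
Theorem proposition1 (VH : finType) (eH : rel VH)
  (eH_sym : symmetric eH) (eH_irr : irreflexive eH)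
  (r : nat) (ell : 'I_r -> nat) (ell_pos : forall i, 0 < ell i)
  (S : 'I_r -> {set VH}) :
  \sum_(i < r) gamma (ell i) <= graph_imbalance (@succ_edge VH eH r ell S).
Proof.
rewrite /graph_imbalance; apply: (big_ind (leq _)) => [|m n le_m le_n|s _].
- exact: sum_gamma_le_ord_imbalance.
- by rewrite leq_min le_m le_n.
- exact: sum_gamma_le_ord_imbalance.
Qed.
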